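(* Let $n\ge1$, $\mathbf{k}=(k_1,\dots,k_n)$ positive integers, $D\in\mathcal{D}_{\mathbf{k}}$, and $R=R(D)$. Then the directed multigraph $G_R$ is balanced: every vertex $a$ of $G_R$ has in-degree equal to its out-degree, and both equal $|S(a)|$.
   Context: $|\mathbf{k}|=k_1+\cdots+k_n$, $N=n+|\mathbf{k}|$. $\mathcal{D}_{\mathbf{k}}$: sequences $(a_1,\dots,a_N)$ whose positive entries are $k_1,\dots,k_n$ in order, other entries $-1$, all partial sums $a_1+\cdots+a_{i-1}\ge0$. SW-word: $S^{k_j}$ for up step $k_j$, $W$ for $-1$. Filling Algorithm producing $T(D)$: $n$ columns, column $i$ with $k_i+1$ cells in rows $1,\dots,k_i+1$; place $1$ at top of column 1; having placed $1,\dots,i-1$, the lowest filled entry of column $j$ is active if not in row $k_j+1$; if the $i$-th letter is $W$ place $i$ below the smallest active entry, otherwise at the top of the leftmost empty column; continue until $1,\dots,N$ placed. Entries of $T(D)$ are indices; $t_i$ is the top index of column $i$. Ranking Algorithm producing $R(D)$: ranks $0,\dots,k_1$ to column-1 indices top to bottom; for $i=2,\dots,n$, if index $t_i-1$ has rank $a$, column $i$ gets ranks $a,\dots,a+k_i$ top to bottom. $G_R$ is the directed multigraph whose vertices are the ranks appearing in $R$, with one directed edge for each index of $T(D)$: if the index is $t_i$ with rank $a$, the edge is $a\to a+k_i$; if the index is not in row 1 and has rank $b$, the edge is $b\to b-1$. $S(a)$ is the set of indices with rank $a$. *)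

From mathcomp Require Import all_boot all_order all_algebra.
Set Implicit Arguments. Unset Strict Implicit. Unset Printing Implicit Defensive.
Import Order.TTheory GRing.Theory Num.Theory.

(* Conventions: k = [:: k_1; ...; k_n] is a seq nat, columns are numbered
   0..n-1 (column j here is column j+1 of the paper), rows are numbered
   0..k_j (row r here is row r+1 of the paper), indices are 1..N as in the
   paper. *)

Section Algo.
Variable k : seq nat.

Definition nk := size k.
Definition kk (j : nat) : nat := nth 0 k j.
Definition bigN := nk + sumn k.

Definition inDk (D : seq int) : Prop :=
  [/\ size D = bigN,
      [seq x <- D | (0 < x)%R] = [seq Posz m | m <- k],
      all (fun x : int => (0 < x)%R || (x == (-1)%R)) D &
      forall i, i < size D -> (0 <= \sum_(j < i) nth 0%R D j)%R].

(* state: the n columns, each listed top to bottom *)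
Definition col_of_state (cols : seq (seq nat)) j := nth [::] cols j.

(* lowest filled entry of column j is active: the column is nonempty and
   its lowest entry is not in the last row (row k_j + 1 of the paper) *)
Definition active (cols : seq (seq nat)) (j : nat) : bool :=
  (col_of_state cols j != [::]) && (size (col_of_state cols j) < kk j + 1).

Definition lowest (cols : seq (seq nat)) j := last 0 (col_of_state cols j).

Definition pick_active (cols : seq (seq nat)) : option nat :=
  match [seq j <- iota 0 nk | active cols j] with
  | [::] => None
  | j0 :: js => Some (foldl (fun b j => if lowest cols j < lowest cols b
                                       then j else b) j0 js)
  end.

(* place index i, whose letter is W iff a_i = -1 (i.e. a_i < 0) *)
Definition fill_step (D : seq int) (cols : seq (seq nat)) (i : nat) :=
  if (nth 0%R D i.-1 < 0)%R then
    match pick_active cols with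
    | Some j => set_nth [::] cols j (rcons (col_of_state cols j) i)
    | None => cols
    end
  else
    let j := find (fun c : seq nat => c == [::]) cols in
    if j < nk then set_nth [::] cols j [:: i] else cols.

Definition fillT (D : seq int) : seq (seq nat) :=
  foldl (fill_step D) ([:: 1] :: nseq nk.-1 [::]) (iota 2 (size D).-1).

Variable D : seq int.
Definition T := fillT D.

Definition colT (x : nat) : nat := find (fun c : seq nat => x \in c) T.
Definition rowT (x : nat) : nat := index x (col_of_state T (colT x)).
Definition topT (j : nat) : nat := head 0 (col_of_state T j).

(* bases m = ranks of the top cells of columns 0..m-1 *)
Fixpoint bases (m : nat) : seq nat :=
  match m with
  | 0 => [::]
  | m'.+1 =>
      let bs := bases m' in
      rcons bs (if m' == 0 then 0
                else let x := (topT m').-1 in nth 0 bs (colT x) + rowT x)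
  end.

Definition rankR (x : nat) : nat := nth 0 (bases nk) (colT x) + rowT x.

Definition indices : seq nat := iota 1 (size D).

Definition vertices : seq nat := [seq rankR x | x <- indices].

Definition edgeOf (x : nat) : nat * nat :=
  if rowT x == 0 then (rankR x, rankR x + kk (colT x))
  else (rankR x, (rankR x).-1).

Definition edges : seq (nat * nat) := [seq edgeOf x | x <- indices].

Definition indeg (a : nat) : nat := count (fun e => e.2 == a) edges.
Definition outdeg (a : nat) : nat := count (fun e => e.1 == a) edges.

Definition Sset (a : nat) : seq nat := [seq x <- indices | rankR x == a].

End Algo.

From mathcomp Require Import all_boot all_order all_algebra zify.
Set Implicit Arguments. Unset Strict Implicit. Unset Printing Implicit Defensive.
Import Order.TTheory GRing.Theory Num.Theory.

(* Every column of T(D) ends up full.  After reading i letters, c of them S,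
   the first c columns can hold c + k_1 + ... + k_c indices, and the Dyck
   condition on the partial sums says exactly that this is at least i; so a W
   letter always finds an active entry, and since the capacities of all n
   columns add up to N, every column of T(D) gets its k_j + 1 cells.
   A full column with top rank b contributes edges leaving the ranks
   b, ..., b + k_j and entering b + k_j, b, ..., b + k_j - 1, the same multiset.
   Hence the targets of all edges of G_R are a permutation of their sources,
   which is in-degree = out-degree; and each index is the source of exactly one
   edge, starting at its own rank, so the out-degree of a is |S(a)|. *)

Lemma eq_from_leq_sum (I : finType) (F G : I -> nat) :
  (forall i, F i <= G i) -> \sum_i F i = \sum_i G i -> forall i, F i = G i.
Proof.
move=> le_FG sum_eq i.
have [_] := leqif_sum (P := predT) (fun i _ => leqif_eq (le_FG i)).
by rewrite sum_eq eqxx => /esym/forallP/(_ i)/eqP.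
Qed.

Lemma size_flatten_nth (A : Type) (ss : seq (seq A)) :
  size (flatten ss) = \sum_(j < size ss) size (nth [::] ss j).
Proof. by rewrite size_flatten sumnE big_map (big_nth [::]) big_mkord. Qed.

Lemma iota_rcons m n : iota m n.+1 = rcons (iota m n) (m + n).
Proof. by rewrite -addn1 iotaD cats1. Qed.

Lemma perm_flatten_set_rcons (A : eqType) (ss : seq (seq A)) s j x :
  j < size ss -> perm_eq (flatten ss) s ->
  perm_eq (flatten (set_nth [::] ss j (rcons (nth [::] ss j) x))) (rcons s x).
Proof.
move=> hj hperm; rewrite set_nthE hj flatten_cat /= -!cats1.
rewrite -(cat_take_drop j ss) (drop_nth [::] hj) flatten_cat /= in hperm.
apply/permP => y; have := permP hperm y; rewrite !count_cat; lia.
Qed.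

Lemma find_first (A : Type) (a : pred A) x0 s i :
  i < size s -> a (nth x0 s i) -> (forall j, j < i -> ~~ a (nth x0 s j)) ->
  find a s = i.
Proof.
move=> hi ai before_i; apply/eqP; rewrite eqn_leq.
apply/andP; split; rewrite leqNgt; apply/negP => hlt.
  by rewrite (before_find x0 hlt) in ai.
have has_a : has a s by apply/(has_nthP x0); exists i.
by have := before_i _ hlt; rewrite nth_find.
Qed.

Lemma foldl_select_mem (A : eqType) (f : A -> A -> A) :
  (forall x y, f x y \in [:: x; y]) -> forall s x, foldl f x s \in x :: s.
Proof.
move=> f_sel; elim=> [|y s IH] x /=; first exact: mem_head.
have := IH (f x y); rewrite !inE => /orP[/eqP -> | ->]; last by rewrite !orbT.
by have := f_sel x y; rewrite !inE => /orP[] ->; rewrite ?orbT.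
Qed.

Lemma uniq_nth_flatten (A : eqType) (ss : seq (seq A)) j :
  uniq (flatten ss) -> uniq (nth [::] ss j).
Proof.
elim: ss j => [|s ss IH] [|j] //=; rewrite cat_uniq => /and3P[uniq_s _ uniq_ss] //.
exact: IH.
Qed.

Lemma find_mem_uniq_flatten (A : eqType) (ss : seq (seq A)) j x :
  uniq (flatten ss) -> j < size ss -> x \in nth [::] ss j ->
  find (fun s => x \in s) ss = j.
Proof.
elim: ss j => [|s ss IH] [|j] //=; first by move=> _ _ ->.
rewrite cat_uniq => /and3P[_ disj uniq_ss] hj x_in.
have x_notin_s : x \notin s.
  apply: contra disj => x_in_s; apply/hasP; exists x => //.
  by apply/flattenP; exists (nth [::] ss j); rewrite ?mem_nth.
by rewrite (negbTE x_notin_s) (IH j).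
Qed.

Lemma map_uniq_index (A : eqType) (B : Type) (s : seq A) (f : A -> B) (g : nat -> B) :
  uniq s -> {in s, forall x, f x = g (index x s)} ->
  map f s = map g (iota 0 (size s)).
Proof.
case: s => [|x0 s0] // uniq_s f_g; set s := x0 :: s0.
rewrite -[in LHS](mkseq_nth x0 s) -map_comp; apply/eq_in_map => r.
by rewrite mem_iota /= => r_lt; rewrite f_g ?mem_nth ?index_uniq.
Qed.

Lemma perm_flatten_map (I A : eqType) (s : seq I) (f g : I -> seq A) :
  (forall i, i \in s -> perm_eq (f i) (g i)) ->
  perm_eq (flatten (map f s)) (flatten (map g s)).
Proof.
elim: s => [|i s IH] //= fg; rewrite perm_cat ?fg ?mem_head // IH // => j j_in.
by rewrite fg // in_cons j_in orbT.
Qed.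

Definition up_count (D : seq int) m := count (fun x : int => (0 < x)%R) (take m D).

Definition capacity (k : seq nat) c := \sum_(j < c) (kk k j).+1.

Lemma capacityE k c : capacity k c = c + \sum_(j < c) kk k j.
Proof.
rewrite /capacity; under eq_bigr do rewrite -addn1.
by rewrite big_split /= sum1_card card_ord addnC.
Qed.

Lemma sumn_kk k : sumn k = \sum_(j < size k) kk k j.
Proof. by rewrite sumnE (big_nth 0) big_mkord. Qed.

Section UpSteps.
Variables (k : seq nat) (D : seq int).
Hypothesis up_letters : [seq x <- D | (0 < x)%R] = [seq Posz m | m <- k].
Hypothesis letters : all (fun x : int => (0 < x)%R || (x == (-1)%R)) D.
Hypothesis size_D : size D = bigN k.
Hypothesis nonneg_prefix :
  forall i, i < size D -> (0 <= \sum_(j < i) nth 0%R D j)%R.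

Lemma up_count_le m : up_count D m <= m.
Proof. by rewrite /up_count (leq_trans (count_size _ _)) // size_take_min geq_minl. Qed.

Lemma up_count_le_size m : up_count D m <= size k.
Proof.
rewrite -(size_map Posz) -up_letters size_filter /up_count.
by rewrite -[X in _ <= count _ X](cat_take_drop m) count_cat leq_addr.
Qed.

Lemma up_count_size : up_count D (size D) = size k.
Proof. by rewrite /up_count take_size -size_filter up_letters size_map. Qed.

Lemma up_countS m : m < size D ->
  up_count D m.+1 = up_count D m + (0 < nth 0%R D m)%R.
Proof. by move=> hm; rewrite /up_count (take_nth 0%R hm) -cats1 count_cat /= addn0. Qed.

Lemma up_letter_value m : m < size D -> (0 < nth 0%R D m)%R ->
  nth 0%R D m = Posz (kk k (up_count D m)).
Proof.
move=> hm hpos.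
have split_D : [seq x <- D | (0 < x)%R] =
    [seq x <- take m D | (0 < x)%R] ++ nth 0%R D m :: [seq x <- drop m.+1 D | (0 < x)%R].
  by rewrite -{1}(cat_take_drop m D) (drop_nth 0%R hm) filter_cat /= hpos.
have := congr1 (nth 0%R ^~ (up_count D m)) split_D.
rewrite nth_cat size_filter ltnn subnn /= up_letters => <-.
rewrite (nth_map 0) // -(size_map Posz) -up_letters split_D size_cat size_filter.
by rewrite /= addnS ltnS leq_addr.
Qed.

Lemma prefix_sumE i : i <= size D ->
  (\sum_(j < i) nth 0%R D j
     = (\sum_(j < up_count D i) kk k j)%:Z - (i - up_count D i)%:Z)%R.
Proof.
elim: i => [|i IH] hi; first by rewrite /up_count take0 !big_ord0 subnn subrr.
have hc := up_count_le i.
rewrite big_ord_recr /= IH ?(ltnW hi) // up_countS //.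
case/orP: (all_nthP 0%R letters i hi) => [hpos | /eqP hneg].
- rewrite hpos addn1 big_ord_recr /= (up_letter_value hi hpos).
  by rewrite subSS PoszD addrAC.
- by rewrite hneg ltr0N1 addn0 subSn // -addn1 PoszD opprD addrA.
Qed.

Lemma dyck_bound i : i <= size D -> i <= capacity k (up_count D i).
Proof.
rewrite capacityE leq_eqVlt => /orP[/eqP -> | hi].
  by rewrite up_count_size -sumn_kk size_D.
have := nonneg_prefix hi.
by rewrite prefix_sumE ?(ltnW hi) // subr_ge0 lez_nat leq_subLR.
Qed.

End UpSteps.

Lemma pick_active_some (k : seq nat) cols :
  has (active k cols) (iota 0 (nk k)) ->
  exists2 j, pick_active k cols = Some j & (j < nk k) && active k cols j.
Proof.
rewrite has_filter /pick_active.
have in_filter j : j \in [seq j <- iota 0 (nk k) | active k cols j] ->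
    (j < nk k) && active k cols j.
  by rewrite mem_filter mem_iota andbC.
case: [seq j <- _ | _] in_filter => [|j0 js] // in_filter _.
exists (foldl (fun b j => if lowest cols j < lowest cols b then j else b) j0 js) => //.
by apply/in_filter/foldl_select_mem => b j; case: ifP; rewrite !inE eqxx ?orbT.
Qed.

Section Filling.
Variables (k : seq nat) (D : seq int).
Hypothesis up_letters : [seq x <- D | (0 < x)%R] = [seq Posz m | m <- k].
Hypothesis letters : all (fun x : int => (0 < x)%R || (x == (-1)%R)) D.
Hypothesis dyck : forall i, i <= size D -> i <= capacity k (up_count D i).

Definition filling_inv m (cols : seq (seq nat)) :=
  [/\ size cols = nk k,
      perm_eq (flatten cols) (iota 1 m),
      forall j, j < nk k -> (nth [::] cols j != [::]) = (j < up_count D m) &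
      forall j, j < nk k -> size (nth [::] cols j) <= (kk k j).+1].

Lemma filling_inv_rcons m cols j :
  filling_inv m cols -> j < nk k -> size (nth [::] cols j) <= kk k j ->
  j <= up_count D m -> up_count D m.+1 = up_count D m + (j == up_count D m) ->
  filling_inv m.+1 (set_nth [::] cols j (rcons (nth [::] cols j) m.+1)).
Proof.
move=> [hsz hperm hne hle] hj room_j j_le up_next; split.
- by rewrite size_set_nth hsz; apply/maxn_idPr.
- by rewrite iota_rcons add1n; apply: perm_flatten_set_rcons; rewrite ?hsz.
- move=> i hi; rewrite nth_set_nth /= up_next.
  have [-> | neq_ij] := eqVneq i j.
    rewrite -size_eq0 size_rcons.
    case: (eqVneq j (up_count D m)) => [<- | neq_j]; first by rewrite addn1 ltnSn.
    by rewrite addn0 ltn_neqAle neq_j.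
  rewrite hne //; case: eqVneq => [eq_j | _]; last by rewrite addn0.
  by rewrite addn1 ltnS [i <= _]leq_eqVlt -eq_j (negbTE neq_ij).
- move=> i hi; rewrite nth_set_nth /=.
  by case: eqVneq => [-> | _]; [rewrite size_rcons | exact: hle].
Qed.

Lemma has_active_column m cols :
  m < size D -> (nth 0%R D m < 0)%R -> filling_inv m cols ->
  has (active k cols) (iota 0 (nk k)).
Proof.
move=> hm hneg [hsz hperm hne hle]; apply/negPn/negP => /hasPn no_active.
set c := up_count D m.
have c_le : c <= nk k by exact: up_count_le_size.
have full j : j < nk k -> size (nth [::] cols j) = if j < c then (kk k j).+1 else 0.
  move=> hj; have := no_active j; rewrite mem_iota hj /active /col_of_state hne //.
  case: ifP => [_ /(_ isT) | not_lt _].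
    by rewrite addn1 -leqNgt => ?; apply/eqP; rewrite eqn_leq hle.
  by move: (hne j hj); rewrite not_lt => /negbFE/eqP ->.
have size_m : m = capacity k c.
  rewrite -[m](size_iota 1) -(perm_size hperm) size_flatten_nth hsz.
  rewrite /capacity (big_ord_widen _ (fun j => (kk k j).+1) c_le) [RHS]big_mkcond.
  by apply: eq_bigr => j _; apply: full.
by have := dyck hm; rewrite up_countS // lt_gtF // addn0 -/c -size_m ltnn.
Qed.

Lemma fill_step_inv m cols :
  m < size D -> filling_inv m cols -> filling_inv m.+1 (fill_step k D cols m.+1).
Proof.
move=> hm inv; have [hsz _ hne _] := inv.
rewrite /fill_step /=; case: ifP => hneg.
  have [j -> /andP[hj /andP[nonempty_j room_j]]] :=
    pick_active_some (has_active_column hm hneg inv).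
  have j_lt : j < up_count D m by rewrite -hne.
  apply: filling_inv_rcons => //; first by move: room_j; rewrite addn1 ltnS.
    exact: ltnW.
  by rewrite up_countS // lt_gtF // (ltn_eqF j_lt).
have hpos : (0 < nth 0%R D m)%R.
  by case/orP: (all_nthP 0%R letters m hm) => // /eqP hm1; rewrite hm1 in hneg.
set c := up_count D m.
have up_next : up_count D m.+1 = c.+1 by rewrite up_countS // hpos addn1.
have c_lt : c < nk k by have := up_count_le_size up_letters m.+1; rewrite up_next.
have empty_c : nth [::] cols c = [::] by apply/eqP; rewrite -[_ == _]negbK hne // ltnn.
have -> : find (fun col => col == [::]) cols = c.
  apply: (find_first (x0 := [::])); rewrite ?hsz ?empty_c // => j hj.
  by rewrite hne ?hj // (ltn_trans hj c_lt).
have -> : [:: m.+1] = rcons (nth [::] cols c) m.+1 by rewrite empty_c.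
by rewrite c_lt; apply: filling_inv_rcons; rewrite ?empty_c ?eqxx ?up_next ?addn1.
Qed.

Lemma filling_inv_init :
  0 < size k -> 0 < size D -> filling_inv 1 ([:: 1] :: nseq (nk k).-1 [::]).
Proof.
move=> hk hD; have up1 : up_count D 1 = 1.
  have := dyck hD; have := up_count_le D 1.
  by case: (up_count D 1) => [|[|]] //; rewrite /capacity big_ord0.
split=> [||[|j] hj|[|j] hj] /=; rewrite ?up1 ?nth_nseq //; try by case: ifP.
- by rewrite size_nseq prednK.
- by elim: (nk k).-1.
Qed.

Lemma filling_inv_fillT :
  0 < size k -> 0 < size D -> filling_inv (size D) (T k D).
Proof.
move=> hk hD; rewrite /T /fillT.
suff inv_m m : 0 < m <= size D ->
    filling_inv m (foldl (fill_step k D) ([:: 1] :: nseq (nk k).-1 [::]) (iota 2 m.-1)).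
  by apply: inv_m; rewrite hD leqnn.
elim: m => [|[|m] IH] // /andP[_ hm]; first exact: filling_inv_init.
rewrite iota_rcons foldl_rcons add2n.
by apply: fill_step_inv => //; apply: IH; exact: ltnW.
Qed.

Hypothesis size_k_gt0 : 0 < size k.
Hypothesis size_D : size D = bigN k.

Lemma fillT_complete :
  [/\ size (T k D) = nk k,
      forall j, j < nk k -> size (nth [::] (T k D) j) = (kk k j).+1 &
      perm_eq (flatten (T k D)) (indices D)].
Proof.
have size_D_gt0 : 0 < size D by rewrite size_D addn_gt0 size_k_gt0.
have [hsz hperm _ hle] := filling_inv_fillT size_k_gt0 size_D_gt0.
split=> // j hj.
have sum_sizes : \sum_(i < nk k) size (nth [::] (T k D) i) = capacity k (nk k).
  rewrite -hsz -size_flatten_nth (perm_size hperm) size_iota size_D hsz.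
  by rewrite capacityE -sumn_kk.
exact: (eq_from_leq_sum (fun i : 'I_(nk k) => hle i (ltn_ord i)) sum_sizes (Ordinal hj)).
Qed.

End Filling.

(* The edge of G_R coming from row [r] of a full column of height [h.+1] whose
   top cell has rank [b]. *)
Definition cell_edge (b h r : nat) : nat * nat :=
  if r == 0 then (b + r, b + r + h) else (b + r, (b + r).-1).

Lemma perm_cell_edges b h :
  perm_eq [seq (cell_edge b h r).2 | r <- iota 0 h.+1]
          [seq (cell_edge b h r).1 | r <- iota 0 h.+1].
Proof.
have sources : [seq (cell_edge b h r).1 | r <- iota 0 h.+1] = iota b h.+1.
  by rewrite -[b in RHS]addn0 iotaDl; apply/eq_map => r; rewrite /cell_edge; case: ifP.
have targets : [seq (cell_edge b h r).2 | r <- iota 0 h.+1] = b + h :: iota b h.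
  rewrite /cell_edge /= addn0; congr (_ :: _).
  rewrite (iotaDl 1 0) -map_comp -[b in RHS]addn0 iotaDl.
  by apply/eq_map => r /=; rewrite addnCA add1n.
by rewrite sources targets iota_rcons perm_sym perm_rcons.
Qed.

Section Balance.
Variables (k : seq nat) (D : seq int).
Hypothesis T_size : size (T k D) = nk k.
Hypothesis T_heights : forall j, j < nk k -> size (nth [::] (T k D) j) = (kk k j).+1.
Hypothesis T_perm : perm_eq (flatten (T k D)) (indices D).

Lemma edges_column j : j < nk k ->
  map (edgeOf k D) (nth [::] (T k D) j) =
  map (cell_edge (nth 0 (bases k D (nk k)) j) (kk k j)) (iota 0 (kk k j).+1).
Proof.
move=> hj; have uniq_T : uniq (flatten (T k D)) by rewrite (perm_uniq T_perm) iota_uniq.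
rewrite -T_heights //; apply: map_uniq_index; first exact: uniq_nth_flatten.
move=> x x_in; have col_x : colT k D x = j.
  by rewrite /colT (find_mem_uniq_flatten uniq_T _ x_in) ?T_size.
by rewrite /edgeOf /rankR /rowT col_x.
Qed.

Lemma perm_edge_targets_sources :
  perm_eq [seq e.2 | e <- edges k D] [seq e.1 | e <- edges k D].
Proof.
have perm_T f : perm_eq (map f (flatten (T k D))) (map f (indices D)) := perm_map f T_perm.
rewrite /edges -!map_comp -(permPl (perm_T _ _)) -(permPr (perm_T _ _)).
rewrite -(mkseq_nth [::] (T k D)) T_size !map_flatten -!map_comp.
apply: perm_flatten_map => j; rewrite mem_iota add0n => /andP[_ hj] /=.
by rewrite !(map_comp _ (edgeOf k D)) edges_column // -!map_comp; apply: perm_cell_edges.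
Qed.

Lemma indeg_outdeg a : indeg k D a = outdeg k D a.
Proof.
have := permP perm_edge_targets_sources (pred1 a).
by rewrite /indeg /outdeg /edges !count_map.
Qed.

End Balance.

Lemma outdeg_size_Sset k D a : outdeg k D a = size (Sset k D a).
Proof.
rewrite /outdeg /Sset /edges count_map size_filter; apply: eq_count => x.
by rewrite /preim /edgeOf /=; case: ifP.
Qed.

Theorem mainTheorem9 (k : seq nat) (D : seq int) :
  0 < size k ->
  all (fun m => 0 < m) k ->
  inDk k D ->
  forall a, a \in vertices k D ->
    indeg k D a = outdeg k D a /\ outdeg k D a = size (Sset k D a).
Proof.
(* The positivity of the k_j already follows from [inDk k D]. *)
move=> size_k_gt0 _ [size_D up_letters letters nonneg_prefix] a _.
split; last exact: outdeg_size_Sset.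
have dyck := dyck_bound up_letters letters size_D nonneg_prefix.
have [T_size T_heights T_perm] := fillT_complete up_letters letters dyck size_k_gt0 size_D.
exact: indeg_outdeg T_size T_heights T_perm a.
Qed.
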